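(* Consider the slotted transmission system with persistently backlogged transmitter and transmission policy $P$ described in the context, with loss probability $p\in[0,1)$, feedback delay $d\ge0$ and threshold $\gamma>0$. Suppose the loss process $\{X_k\}$ is ergodic. Then, with $\bar{S}_k:=\frac1k\sum_{i=1}^kS_i$, $$\lim_{k\to\infty}\big|E[\bar{S}_k]-(1-p)\big|\le\frac{1+2d}{\gamma},$$ and $E\big(\frac1k\sum_{i=1}^kQ^r_i\big)<\infty$ for all $k$.
   Context: Time is slotted, slots $k=1,2,\dots$; in each slot exactly one packet is transmitted over a lossy path: the transmitter queue of information packets is assumed to be persistently backlogged, and in slot $k$ either an information packet ($S_k=1$) or a coded packet ($C_k=1$) is sent, with $S_k=1-C_k$, $S_k,C_k\in\{0,1\}$. Erasures: $X_k=1$ if the packet sent in slot $k$ is erased and $0$ otherwise, $X_k\in\{0,1\}$ with $E[X_k]=p$. The virtual receiver queue evolves as $Q^r_{k+1}=[Q^r_k+S_kX_k-C_k(1-X_k)]^+$, where $[x]^+=\max\{x,0\}$. Feedback reaches the transmitter with delay $d$ slots; the transmitter uses the estimate $\hat{Q}^r_k=Q^r_{k-d}+\sum_{j=k-d}^{k-1}(S_jp-C_j(1-p))$ (quantities with non-positive indices are given initial values). Transmission policy $P$ with parameter $\gamma$: $C_k\in\arg\min_{C\in\{0,1\}}(-\hat{Q}^r_k+\gamma)C$, $S_k=1-C_k$. *)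

From HB Require Import structures.
From mathcomp Require Import all_boot all_order all_algebra.
From mathcomp Require Import all_classical all_reals all_analysis.
Set Implicit Arguments. Unset Strict Implicit. Unset Printing Implicit Defensive.
Import Order.TTheory GRing.Theory Num.Theory.
Local Open Scope classical_set_scope.
Local Open Scope ring_scope.

(* ---------- Pathwise dynamics ----------
   Slots are k = 1,2,...; a sequence u : nat -> _ stores slot k at index k-1.
   x n = X_{n+1} (erasure indicator), c n = C_{n+1}, S_{n+1} = ~~ c n.
   Quantities with non-positive slot index k <= 0 are given initial values:
   Q^r_k = qinit k and C_k = cinit k (S_k = ~~ cinit k) for k <= 0;
   Q^r_1 = q1 is the initial queue value. *)

(* Qr q1 x c n = Q^r_{n+1}, with Q^r_{k+1} = [Q^r_k + S_k X_k - C_k (1-X_k)]^+ *)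
Fixpoint Qr {R : realType} (q1 : R) (x c : nat -> bool) (n : nat) : R :=
  match n with
  | 0 => q1
  | m.+1 => Num.max (Qr q1 x c m + (~~ c m)%:R * (x m)%:R
                      - (c m)%:R * (1 - (x m)%:R)) 0
  end.

Definition Qslot {R : realType} (qinit : int -> R) (q1 : R) (x c : nat -> bool)
  (k : int) : R :=
  if (0 < k)%R then Qr q1 x c (`|k|%N.-1) else qinit k.

Definition Cslot (cinit : int -> bool) (c : nat -> bool) (k : int) : bool :=
  if (0 < k)%R then c (`|k|%N.-1) else cinit k.

Definition Qhat {R : realType} (p : R) (d : nat) (qinit : int -> R)
  (cinit : int -> bool) (q1 : R) (x c : nat -> bool) (k : int) : R :=
  Qslot qinit q1 x c (k - d%:Z)
  + \sum_(i < d) ((~~ Cslot cinit c (k - d%:Z + i%:Z))%:R * p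
                  - (Cslot cinit c (k - d%:Z + i%:Z))%:R * (1 - p)).

(* Policy P with parameter gamma: C_k in argmin_{C in {0,1}} (-hatQ_k + gamma) C,
   for every slot k = n+1 >= 1. *)
Definition policyP {R : realType} (gamma p : R) (d : nat) (qinit : int -> R)
  (cinit : int -> bool) (q1 : R) (x c : nat -> bool) : Prop :=
  forall n : nat, forall C : bool,
    (- Qhat p d qinit cinit q1 x c (n.+1)%:Z + gamma) * (c n)%:R
    <= (- Qhat p d qinit cinit q1 x c (n.+1)%:Z + gamma) * C%:R.

(* cylinder sets of nat -> bool, generating the product sigma-algebra *)
Definition cylinders : set (set (nat -> bool)) :=
  [set A | exists (n : nat) (b : nat -> bool),
           A = [set w | forall i, (i < n)%N -> w i = b i]].

Definition path_of {T : Type} (X : nat -> T -> bool) (t : T) : nat -> bool :=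
  fun n => X n t.

Definition stationary_process {R : realType} {dT : measure_display}
  {T : measurableType dT} (P : probability T R) (X : nat -> T -> bool) : Prop :=
  forall (m n : nat) (b : nat -> bool),
    P [set t | forall i, (i < n)%N -> X (m + i)%N t = b i]
    = P [set t | forall i, (i < n)%N -> X i t = b i].

Definition ergodic_process {R : realType} {dT : measure_display}
  {T : measurableType dT} (P : probability T R) (X : nat -> T -> bool) : Prop :=
  stationary_process P X /\
  forall B : set (nat -> bool),
    <<s cylinders >> B ->
    (forall w, B w <-> B (fun n => w n.+1)) ->
    P (path_of X @^-1` B) = 0%E \/ P (path_of X @^-1` B) = 1%E.

(* The estimate [Qhat] equals the queue d slots ago plus the expected drift
   since then, so it is within d of the true queue.  If gamma > 1 + 2 d, a
   coded packet is therefore only sent when the queue is at least 1 (so the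
   positive part in its recursion is inactive after slot d), and the queue
   never exceeds q1 + gamma + 3 d + 1.  Hence the cumulative drift
   sum_i (X_i - C_i) stays bounded along every sample path, the frequency of
   information packets is within O(1/k) of the frequency of non-erasures, and
   taking expectations gives |E S_k - (1 - p)| = O(1/k), whose limsup is 0.
   If gamma <= 1 + 2 d the claimed bound is at least 1 and holds trivially. *)

From HB Require Import structures.
From mathcomp Require Import all_boot all_order all_algebra.
From mathcomp Require Import all_classical all_reals all_analysis.
From mathcomp Require Import measurable_realfun zify lra.

Set Implicit Arguments.
Unset Strict Implicit.
Unset Printing Implicit Defensive.

Import Order.TTheory GRing.Theory Num.Theory.
Local Open Scope classical_set_scope.
Local Open Scope ring_scope.

Lemma sumr_le_card (R : realDomainType) n (F : 'I_n -> R) :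
  (forall i, F i <= 1) -> \sum_(i < n) F i <= n%:R.
Proof.
move=> F_le1; have -> : n%:R = \sum_(i < n) (1 : R) by rewrite sumr_const card_ord.
exact: ler_sum.
Qed.

Definition freq {R : numFieldType} (k : nat) (b : nat -> bool) : R :=
  k%:R^-1 * \sum_(i < k) (b i)%:R.

Section Frequency.
Context {R : realFieldType} (k : nat).

Lemma freq_ge0 b : 0 <= freq k b :> R.
Proof. by rewrite mulr_ge0 ?invr_ge0 // sumr_ge0. Qed.

Lemma freq_le1 b : freq k b <= 1 :> R.
Proof.
case: k => [|n]; first by rewrite /freq big_ord0 mulr0.
rewrite /freq ler_pdivrMl ?ltr0Sn // mulr1.
by apply: sumr_le_card => i; case: (b i).
Qed.

Lemma freqB b b' : freq k b - freq k b' =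
  k%:R^-1 * \sum_(i < k) ((b i)%:R - (b' i)%:R) :> R.
Proof. by rewrite /freq sumrB mulrBr. Qed.

Lemma norm_freqB_le1 b b' : `|freq k b - freq k b'| <= 1 :> R.
Proof.
have := freq_ge0 b; have := freq_le1 b; have := freq_ge0 b'; have := freq_le1 b'.
by rewrite ler_norml; lra.
Qed.

End Frequency.

Section QueueDynamics.
Context {R : realType} (q1 : R) (x c : nat -> bool).
Local Notation q := (Qr q1 x c).

Lemma Qr_succ n : q n.+1 = Num.max (q n + (x n)%:R - (c n)%:R) 0.
Proof. by rewrite /=; congr (Num.max _ 0); case: (c n); case: (x n) => /=; lra. Qed.

Lemma Qr_succ_ge n : q n + (x n)%:R - (c n)%:R <= q n.+1.
Proof. by rewrite Qr_succ le_max lexx. Qed.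

Lemma Qr_add_ge m j :
  q m + \sum_(i < j) ((x (m + i))%:R - (c (m + i))%:R) <= q (m + j).
Proof.
elim: j => [|j IH]; first by rewrite big_ord0 addr0 addn0.
by rewrite big_ord_recr /= addnS; have := Qr_succ_ge (m + j); lra.
Qed.

Hypothesis q1_ge0 : 0 <= q1.

Lemma Qr_ge0 n : 0 <= q n.
Proof. by case: n => [|n] //; rewrite Qr_succ le_max lexx orbT. Qed.

Lemma Qr_succ_le n : q n.+1 <= q n + 1.
Proof.
rewrite Qr_succ ge_max; apply/andP; split.
  by case: (x n); case: (c n) => /=; lra.
by have := Qr_ge0 n; lra.
Qed.

Lemma Qr_le n : q n <= q1 + n%:R.
Proof.
elim: n => [|n IH]; first by rewrite addr0.
by rewrite -natr1; have := Qr_succ_le n; lra.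
Qed.

Lemma Qr_succ_exact n :
  (c n -> 1 <= q n) -> q n.+1 = q n + (x n)%:R - (c n)%:R.
Proof.
move=> no_trunc; rewrite Qr_succ; apply/max_idPl; have := Qr_ge0 n.
by case: (c n) no_trunc => [/(_ isT)|_]; case: (x n) => /=; lra.
Qed.

Lemma Qr_add_exact m j : (forall n, (m <= n)%N -> c n -> 1 <= q n) ->
  q (m + j) = q m + \sum_(i < j) ((x (m + i))%:R - (c (m + i))%:R).
Proof.
move=> no_trunc; elim: j => [|j IH]; first by rewrite big_ord0 addr0 addn0.
rewrite big_ord_recr /= addnS Qr_succ_exact; last exact/no_trunc/leq_addr.
by rewrite IH; lra.
Qed.

Lemma mean_Qr_ge0 k : 0 <= k%:R^-1 * \sum_(i < k) q i.
Proof. by rewrite mulr_ge0 ?invr_ge0 // sumr_ge0 // => i _; exact: Qr_ge0. Qed.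

Lemma mean_Qr_le k : k%:R^-1 * \sum_(i < k) q i <= q1 + k%:R.
Proof.
case: k => [|k]; first by rewrite big_ord0 mulr0 addr0.
rewrite ler_pdivrMl ?ltr0Sn //.
have -> : k.+1%:R * (q1 + k.+1%:R) = \sum_(i < k.+1) (q1 + k.+1%:R).
  by rewrite sumr_const card_ord mulr_natl.
apply: ler_sum => i _; apply: le_trans (Qr_le i) _.
by rewrite lerD2l ler_nat ltnW.
Qed.

End QueueDynamics.

Section PolicyP.
Context {R : realType} (p gamma q1 : R) (d : nat) (qinit : int -> R)
  (cinit : int -> bool) (x c : nat -> bool).
Local Notation q := (Qr q1 x c).
Local Notation Qh := (Qhat p d qinit cinit q1 x c).

Lemma Qhat_shift m :
  Qh (m + d).+1%:Z = q m + \sum_(i < d) (p - (c (m + i))%:R).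
Proof.
rewrite /Qhat; have -> : (m + d).+1%:Z - d%:Z = m.+1%:Z.
  by rewrite -addSn PoszD addrK.
congr (_ + _); apply: eq_bigr => i _.
rewrite /Cslot -PoszD; have -> : (0 < Posz (m.+1 + i)) = true by [].
by rewrite addSn /=; case: (c (m + i)) => /=; lra.
Qed.

Hypothesis polP : policyP gamma p d qinit cinit q1 x c.

Lemma policyP_idle n : Qh n.+1%:Z < gamma -> c n = false.
Proof.
move=> lt_Qh; have := polP n false; rewrite /= mulr0.
by case: (c n) => //=; rewrite mulr1; lra.
Qed.

Lemma policyP_code n : gamma < Qh n.+1%:Z -> c n.
Proof.
move=> gt_Qh; have := polP n true; rewrite /= mulr1.
by case: (c n) => //=; rewrite mulr0; lra.
Qed.

Hypotheses (p_ge0 : 0 <= p) (p_le1 : p <= 1) (q1_ge0 : 0 <= q1).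

Lemma Qhat_sub_le_Qr m : Qh (m + d).+1%:Z - d%:R <= q (m + d).
Proof.
have := Qr_add_ge q1 x c m d; rewrite Qhat_shift.
have : \sum_(i < d) (p - (x (m + i))%:R) <= d%:R.
  by apply: sumr_le_card => i; have := p_le1; case: (x (m + i)) => /=; lra.
by rewrite !sumrB; lra.
Qed.

Hypothesis gamma_gt : 1 + 2 * d%:R < gamma.

Lemma Qr_untruncated n : (d <= n)%N -> c n -> 1 <= q n.
Proof.
move=> le_dn cn; have := Qhat_sub_le_Qr (n - d); rewrite subnK //.
have : gamma <= Qh n.+1%:Z by rewrite leNgt; apply: contraTN cn => /policyP_idle ->.
by have := gamma_gt; have : 0 <= d%:R :> R by []; lra.
Qed.

Lemma Qr_add_exact_after m j : (d <= m)%N ->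
  q (m + j) = q m + \sum_(i < j) ((x (m + i))%:R - (c (m + i))%:R).
Proof.
by move=> le_dm; apply: Qr_add_exact => // n /(leq_trans le_dm); exact: Qr_untruncated.
Qed.

Lemma Qr_le_Qhat_add m : (d <= m)%N -> q (m + d) <= Qh (m + d).+1%:Z + d%:R.
Proof.
move=> le_dm; rewrite Qhat_shift Qr_add_exact_after //.
have : \sum_(i < d) ((x (m + i))%:R - p) <= d%:R.
  by apply: sumr_le_card => i; have := p_ge0; case: (x (m + i)) => /=; lra.
by rewrite !sumrB; lra.
Qed.

(* Past slot 2 d, a queue above gamma + d makes the estimate exceed gamma, so a
   coded packet is sent and the queue cannot grow. *)
Lemma Qr_bounded n : q n <= q1 + gamma + 3 * d%:R + 1.
Proof.
have d_ge0 : 0 <= d%:R :> R by [].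
elim: n => [|n IH]; first by have := gamma_gt; rewrite /=; lra.
have [le_q|lt_q] := lerP (q n) (gamma + d%:R).
  by have := Qr_succ_le x c q1_ge0 n; have := q1_ge0; lra.
have [lt_n|le_n] := ltnP n (d + d).
  have : n.+1%:R <= (d + d)%:R :> R by rewrite ler_nat.
  by have := gamma_gt; have := Qr_le x c q1_ge0 n.+1; rewrite natrD; lra.
have [le_dn le_d_nd] : (d <= n)%N /\ (d <= n - d)%N by lia.
have cn : c n.
  by apply: policyP_code; have := Qr_le_Qhat_add le_d_nd; rewrite subnK //; lra.
rewrite Qr_succ_exact // ?cn; last by move=> _; exact: Qr_untruncated.
by case: (x n) => /=; lra.
Qed.

Lemma norm_sum_xBc_le k :
  `|\sum_(i < k) ((x i)%:R - (c i)%:R)| <= q1 + gamma + 4 * d%:R + 1.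
Proof.
have d_ge0 : 0 <= d%:R :> R by [].
have gamma_ge1 : 1 <= gamma by have := gamma_gt; lra.
have q_ge0 := Qr_ge0 x c q1_ge0; have q_le := Qr_bounded.
rewrite ler_norml; apply/andP; split; last first.
  have := q1_ge0; have := q_le k.
  by have := Qr_add_ge q1 x c 0 k; rewrite add0n /=; lra.
have sum_xBc_ge j : - j%:R <= \sum_(i < j) ((x i)%:R - (c i)%:R) :> R.
  have : \sum_(i < j) ((c i)%:R - (x i)%:R) <= j%:R :> R.
    by apply: sumr_le_card => i; case: (x i); case: (c i) => /=; lra.
  by rewrite !sumrB; lra.
have [lt_kd|le_dk] := ltnP k d.
  have : k%:R <= d%:R :> R by rewrite ler_nat ltnW.
  by have := q1_ge0; have := sum_xBc_ge k; lra.
rewrite -(subnKC le_dk) big_split_ord /=.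
have := Qr_add_exact_after (k - d)%N (leqnn d).
by have := sum_xBc_ge d; have := q_ge0 (d + (k - d))%N; have := q_le d; lra.
Qed.

Lemma norm_freqB_negb_le k :
  `|freq k (fun i => ~~ c i) - freq k (fun i => ~~ x i)|
    <= (q1 + gamma + 4 * d%:R + 1) / k%:R.
Proof.
rewrite freqB normrM ger0_norm ?invr_ge0 // mulrC ler_wpM2r ?invr_ge0 //.
have -> : \sum_(i < k) ((~~ c i)%:R - (~~ x i)%:R)
          = \sum_(i < k) ((x i)%:R - (c i)%:R) :> R.
  by apply: eq_bigr => i _; case: (x i); case: (c i) => /=; lra.
exact: norm_sum_xBc_le.
Qed.

End PolicyP.

Lemma limn_esup_le {R : realType} (u : (\bar R)^nat) (B : \bar R) :
  (\forall k \near \oo, (u k <= B)%E) -> (limn_esup u <= B)%E.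
Proof.
move=> uB; rewrite /limn_esup limf_esupE.
apply: (le_trans (ereal_inf_lbound _)); first by exists [set k | (u k <= B)%E].
by apply: ge_ereal_sup => _ [k ukB <-].
Qed.

Section ExpectedFrequency.
Context {R : realType} {dT : measure_display} {T : measurableType dT}.
Variable P : probability T R.

Definition prob_freq (k : nat) (b : nat -> T -> bool) : R :=
  k%:R^-1 * \sum_(i < k) fine (P [set t | b i t]).

Lemma set_negb (b : T -> bool) : [set t | ~~ b t] = ~` [set t | b t].
Proof. by apply/seteqP; split => t /=; case: (b t). Qed.

Lemma indic_boolE (b : T -> bool) t : \1_[set t | b t] t = (b t)%:R :> R.
Proof.
by rewrite indicE; have -> : (t \in [set t | b t]) = b t
  by apply/idP/idP => [/set_mem|/mem_set].
Qed.

Lemma measurable_fun_bool (b : T -> bool) :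
  measurable [set t | b t] -> measurable_fun setT (fun t => (b t)%:R : R).
Proof.
move=> mb; rewrite (_ : (fun t => _) = \1_[set t | b t]); first exact: measurable_indic.
by apply/funext => t; rewrite indic_boolE.
Qed.

Lemma integral_bool (b : T -> bool) :
  measurable [set t | b t] -> (\int[P]_t ((b t)%:R)%:E = P [set t | b t])%E.
Proof.
move=> mb; under eq_integral do rewrite -indic_boolE.
by rewrite integral_indic // setIT.
Qed.

Lemma ge0_le_integral_cst (f : T -> R) (M : R) :
  measurable_fun setT f -> (forall t, 0 <= f t) -> (forall t, f t <= M) ->
  (\int[P]_t (f t)%:E <= M%:E)%E.
Proof.
move=> mf f_ge0 f_le; rewrite -[M%:E]mule1 -(probability_setT P) -integral_cst //.
apply: ge0_le_integral => //.
- by move=> t _; rewrite lee_fin.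
- exact/measurable_EFinP.
- by move=> t _; rewrite lee_fin.
Qed.

Lemma ge0_le_integral_addr (f g : T -> R) (e : R) :
  measurable_fun setT f -> measurable_fun setT g ->
  (forall t, 0 <= f t) -> (forall t, 0 <= g t) -> 0 <= e ->
  (forall t, f t <= g t + e) ->
  (\int[P]_t (f t)%:E <= \int[P]_t (g t)%:E + e%:E)%E.
Proof.
move=> mf mg f_ge0 g_ge0 e_ge0 f_le.
rewrite -[e%:E]mule1 -(probability_setT P) -integral_cst // -ge0_integralD //.
- apply: ge0_le_integral => //.
  + by move=> t _; rewrite lee_fin.
  + exact/measurable_EFinP.
  + by apply: emeasurable_funD => //; exact/measurable_EFinP.
  + by move=> t _; rewrite -EFinD lee_fin.
- by move=> t _; rewrite lee_fin.
- exact/measurable_EFinP.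
Qed.

Lemma measurable_freq (b : nat -> T -> bool) k :
  (forall i, measurable [set t | b i t]) ->
  measurable_fun setT (fun t => freq k (b^~ t) : R).
Proof.
move=> mb; apply: measurable_funM; first exact: measurable_cst.
by apply: measurable_sum => i; exact: measurable_fun_bool.
Qed.

Lemma integral_freq (b : nat -> T -> bool) k :
  (forall i, measurable [set t | b i t]) ->
  (\int[P]_t (freq k (b^~ t))%:E = (prob_freq k b)%:E)%E.
Proof.
move=> mb; rewrite /freq /prob_freq.
under eq_integral => t _ do rewrite EFinM -sumEFin.
have mbE i : measurable_fun setT (fun t => ((b i t)%:R : R)%:E).
  exact/measurable_EFinP/measurable_fun_bool.
rewrite ge0_integralZl_EFin ?invr_ge0 //; last 2 first.
- by move=> t _; rewrite sume_ge0.
- exact: emeasurable_sum.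
rewrite ge0_integral_sum // EFinM -sumEFin; congr (_ * _)%E.
by apply: eq_bigr => i _; rewrite integral_bool // fineK // fin_num_measure.
Qed.

Lemma prob_freq_le_addr (b b' : nat -> T -> bool) k e :
  (forall i, measurable [set t | b i t]) ->
  (forall i, measurable [set t | b' i t]) -> 0 <= e ->
  (forall t, freq k (b^~ t) <= freq k (b'^~ t) + e) ->
  prob_freq k b <= prob_freq k b' + e.
Proof.
move=> mb mb' e_ge0 le_freq; rewrite -lee_fin EFinD -!integral_freq //.
by apply: ge0_le_integral_addr => // [||t|t]; by [exact: measurable_freq|exact: freq_ge0].
Qed.

Lemma norm_prob_freqB_le (b b' : nat -> T -> bool) k e :
  (forall i, measurable [set t | b i t]) ->
  (forall i, measurable [set t | b' i t]) -> 0 <= e ->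
  (forall t, `|freq k (b^~ t) - freq k (b'^~ t)| <= e) ->
  `|prob_freq k b - prob_freq k b'| <= e.
Proof.
move=> mb mb' e_ge0 close; rewrite ler_norml.
have close_le t : freq k (b^~ t) <= freq k (b'^~ t) + e /\
                  freq k (b'^~ t) <= freq k (b^~ t) + e :> R.
  by have := close t; rewrite ler_norml => /andP[]; lra.
have := prob_freq_le_addr mb mb' e_ge0 (fun t => (close_le t).1).
have := prob_freq_le_addr mb' mb e_ge0 (fun t => (close_le t).2).
by move=> ? ?; apply/andP; split; lra.
Qed.

Lemma prob_freq_cst (b : nat -> T -> bool) k (a : R) :
  (forall i, P [set t | b i t] = a%:E) -> (0 < k)%N -> prob_freq k b = a.
Proof.
move=> Pb k_gt0; rewrite /prob_freq (eq_bigr (fun=> a)) => [|i _]; last by rewrite Pb.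
by rewrite sumr_const card_ord -[a *+ k]mulr_natl mulKf // pnatr_eq0 -lt0n.
Qed.

Lemma measurable_Qr (q1 : R) (X c : nat -> T -> bool) n :
  (forall i, measurable [set t | X i t]) -> (forall i, measurable [set t | c i t]) ->
  measurable_fun setT (fun t => Qr q1 (X^~ t) (c^~ t) n).
Proof.
move=> mX mc; elim: n => [|n IH]; first exact: measurable_cst.
rewrite (_ : (fun t => _) = (fun t => Qr q1 (X^~ t) (c^~ t) n + (X n t)%:R - (c n t)%:R)
                            \max (fun=> 0)); last by apply/funext => t; rewrite Qr_succ.
apply: measurable_maxr; last exact: measurable_cst.
apply: measurable_funB; last exact: measurable_fun_bool.
by apply: measurable_funD => //; exact: measurable_fun_bool.
Qed.

Lemma norm_integral_freqB_le (b b' : nat -> T -> bool) k (a e : R) :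
  (forall i, measurable [set t | b i t]) ->
  (forall i, measurable [set t | b' i t]) ->
  (forall i, P [set t | b' i t] = a%:E) -> (0 < k)%N -> 0 <= e ->
  (forall t, `|freq k (b^~ t) - freq k (b'^~ t)| <= e) ->
  (`|\int[P]_t (freq k (b^~ t))%:E - a%:E| <= e%:E)%E.
Proof.
move=> mb mb' Pb' k_gt0 e_ge0 close.
rewrite integral_freq // -(prob_freq_cst Pb' k_gt0) -EFinB abse_EFin lee_fin.
exact: norm_prob_freqB_le.
Qed.

Lemma integral_mean_Qr_le (q1 : R) (X c : nat -> T -> bool) k : 0 <= q1 ->
  (forall i, measurable [set t | X i t]) -> (forall i, measurable [set t | c i t]) ->
  (\int[P]_t (k%:R^-1 * \sum_(i < k) Qr q1 (X^~ t) (c^~ t) i)%:E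
    <= (q1 + k%:R)%:E)%E.
Proof.
move=> q1_ge0 mX mc; apply: ge0_le_integral_cst => [|t|t].
- apply: measurable_funM; first exact: measurable_cst.
  by apply: measurable_sum => i; exact: measurable_Qr.
- exact: mean_Qr_ge0.
- exact: mean_Qr_le.
Qed.

End ExpectedFrequency.

Theorem lemma3 (R : realType) (dT : measure_display) (T : measurableType dT)
  (P : probability T R) (X : nat -> T -> bool) (p gamma : R) (d : nat)
  (q1 : R) (qinit : int -> R) (cinit : int -> bool) (c : nat -> T -> bool) :
  0 <= p < 1 -> 0 < gamma ->
  (forall n, measurable [set t | X n t]) ->
  (forall n, P [set t | X n t] = p%:E) ->
  ergodic_process P X ->
  0 <= q1 -> (forall k, 0 <= qinit k) ->
  (forall n, measurable [set t | c n t]) ->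
  (forall t, policyP gamma p d qinit cinit q1 (fun n => X n t) (fun n => c n t)) ->
  (limn_esup (fun k : nat =>
      `| (\int[P]_t ((k%:R)^-1 * \sum_(i < k) (~~ c i t)%:R)%:E) - (1 - p)%:E |%E)
     <= ((1 + 2 * d%:R) / gamma)%:E)%E
  /\ (forall k : nat,
      (\int[P]_t ((k%:R)^-1
                   * \sum_(i < k) Qr q1 (fun n => X n t) (fun n => c n t) i)%:E
       < +oo)%E).
Proof.
move=> /andP[p_ge0 p_lt1] gamma_gt0 mX PX _ q1_ge0 _ mc polP.
have mnX i : measurable [set t | ~~ X i t] by rewrite set_negb; exact: measurableC.
have mnc i : measurable [set t | ~~ c i t] by rewrite set_negb; exact: measurableC.
have PnX i : P [set t | ~~ X i t] = (1 - p)%:E.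
  by rewrite set_negb probability_setC // PX.
split=> [|k]; last exact: le_lt_trans (integral_mean_Qr_le P k q1_ge0 mX mc) (ltry _).
apply: limn_esup_le; near=> k.
have k_gt0 : (0 < k)%N by near: k; exact: nbhs_infty_gt.
have d_ge0 : 0 <= d%:R :> R by [].
have [gamma_le|gamma_gt] := lerP gamma (1 + 2 * d%:R).
  have close t := @norm_freqB_le1 R k (fun i => ~~ c i t) (fun i => ~~ X i t).
  apply: le_trans (norm_integral_freqB_le mnc mnX PnX k_gt0 ler01 close) _.
  by rewrite lee_fin ler_pdivlMr // mul1r.
pose K := q1 + gamma + 4 * d%:R + 1.
have K_ge0 : 0 <= K by rewrite /K; lra.
have close t := norm_freqB_negb_le (polP t) p_ge0 (ltW p_lt1) q1_ge0 gamma_gt k.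
apply: le_trans (norm_integral_freqB_le mnc mnX PnX k_gt0 _ close) _.
  by rewrite divr_ge0.
rewrite lee_fin ler_pdivrMr ?ltr0n // -ler_pdivrMl ?divr_gt0 //.
by apply: ltW; near: k; exact: nbhs_infty_gtr.
Unshelve. all: by end_near.
Qed.
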